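(* Let $\alpha=\ln2/\ln3$ and let $(p_k/q_k)_{k\ge0}$ be the convergents of its simple continued fraction expansion $\alpha=[0;1,1,1,2,2,3,1,5,\ldots]$, indexed so that $p_0/q_0=0/1$, $p_1/q_1=1/1$, $p_2/q_2=1/2$, $p_3/q_3=2/3$, $p_4/q_4=5/8,\ldots$. Then for every odd $k>1$, $$\left|\sum_{i=1}^{p_k}\frac{2^{\lfloor (i-1)/\alpha\rfloor}}{3^i}-\frac{p_k}{6\ln2}\right|<\frac16.$$
   Context: The sum $\sum_{i=1}^{p_k}2^{\lfloor (i-1)/\alpha\rfloor}/3^i$ equals $-\Phi_{\mathbb{R}}(w_k)$, where $w_k$ is the Christoffel word $(\lceil(j+1)p_k/q_k\rceil-\lceil jp_k/q_k\rceil)_{j=0}^{q_k-1}$ (of length $q_k$ and height $p_k$) and $\Phi_{\mathbb{R}}(w)=-\sum_i 2^{d_i}/3^{i+1}$ over the positions $d_i$ of the $1$'s of $w$. *)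

From Stdlib Require Import Reals ZArith Arith.
Open Scope R_scope.

Definition alpha : R := ln 2 / ln 3.

Fixpoint cf_rest (x : R) (n : nat) : R :=
  match n with
  | O => x
  | S m => / frac_part (cf_rest x m)
  end.

Definition cf_digit (x : R) (n : nat) : Z := Int_part (cf_rest x n).

(* ((p_n, q_n), (p_{n-1}, q_{n-1})), with p_{-1} = 1, q_{-1} = 0,
   p_0 = a_0, q_0 = 1, p_n = a_n p_{n-1} + p_{n-2}, same for q. *)
Fixpoint cf_pq (x : R) (n : nat) : (Z * Z) * (Z * Z) :=
  match n with
  | O => ((cf_digit x 0, 1%Z), (1%Z, 0%Z))
  | S m =>
      let '((p, q), (p', q')) := cf_pq x m in
      let a := cf_digit x (S m) in
      (((a * p + p')%Z, (a * q + q')%Z), (p, q))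
  end.

Definition conv_p (x : R) (k : nat) : Z := fst (fst (cf_pq x k)).
Definition conv_q (x : R) (k : nat) : Z := snd (fst (cf_pq x k)).

Fixpoint sum1 (n : nat) (f : nat -> R) : R :=
  match n with
  | O => 0
  | S m => sum1 m f + f (S m)
  end.

(* Let p/q be the k-th convergent, k odd. Then p/q > alpha, p and q are
   coprime, and the gap e = p - q alpha is so small that (p - 1) e < alpha.
   Writing the i-th term (j = i - 1 < p) as 2^(-frac(j/alpha)) / 3, the
   smallness of e shows frac(j/alpha) lies in [r/p, (r+1)/p) for the residue
   r = jq mod p; as j runs over 0..p-1 these residues run over all of
   0..p-1.  With c = 2^(-1/p) the sum therefore lies between c G / 3 and
   G / 3, where G = 1 + c + ... + c^(p-1) = 1/(2(1-c)).  Finally, with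
   u = ln 2 / p, so that c = e^(-u) and p/(6 ln 2) = 1/(6u), the elementary
   bounds 0 < 1/(1 - e^(-u)) - 1/u < 1 give the claim. *)

From Stdlib Require Import Reals ZArith Arith Lia Lra List Permutation.
Open Scope R_scope.

Lemma ln2_pos : 0 < ln 2.
Proof. pose proof ln_lt_2; lra. Qed.

Lemma ln2_lt_ln3 : ln 2 < ln 3.
Proof. apply ln_increasing; lra. Qed.

Lemma alpha_bounds : 0 < alpha < 1.
Proof.
  pose proof ln2_pos; pose proof ln2_lt_ln3; unfold alpha; split.
  - apply Rdiv_lt_0_compat; lra.
  - apply (Rmult_lt_reg_r (ln 3)); [lra|]. field_simplify; lra.
Qed.

(* A positive power of 2 is even while every power of 3 is odd. *)
Lemma pow2_neq_pow3 (N M : nat) : N <> 0%nat -> (2 ^ N <> 3 ^ M)%nat.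
Proof.
  intros HN E. apply (f_equal Nat.odd) in E.
  rewrite Nat.odd_pow in E by exact HN.
  destruct M as [|M]; [discriminate|].
  rewrite Nat.odd_pow in E by lia. discriminate.
Qed.

(* alpha is irrational: n * ln 2 = m * ln 3 would force 2^|n| = 3^|m|. *)
Lemma alpha_irrational (n m : Z) : n <> 0%Z -> alpha * IZR n <> IZR m.
Proof.
  intros Hn E. pose proof ln2_pos; pose proof ln2_lt_ln3.
  assert (Hlog : IZR (Z.abs n) * ln 2 = IZR (Z.abs m) * ln 3).
  { assert (IZR n * ln 2 = IZR m * ln 3) as E'.
    { rewrite <- E; unfold alpha; field; lra. }
    rewrite !abs_IZR, <- (Rabs_pos_eq (ln 2)), <- (Rabs_pos_eq (ln 3)) by lra.
    rewrite <- !Rabs_mult, E'; reflexivity. }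
  rewrite <- !Zabs2Nat.id_abs, <- !INR_IZR_INZ, <- !ln_pow in Hlog by lra.
  apply ln_inv in Hlog; try (apply pow_lt; lra).
  apply (pow2_neq_pow3 (Z.abs_nat n) (Z.abs_nat m)); [lia|].
  apply INR_eq; rewrite !pow_INR.
  replace (INR 2) with 2 by (simpl; ring); replace (INR 3) with 3 by (simpl; ring).
  exact Hlog.
Qed.

Definition convergent_invariant (n : nat) : Prop :=
  let '((p, q), (p', q')) := cf_pq alpha n in
  let x := cf_rest alpha (S n) in
  1 < x /\ (1 <= q)%Z /\ (0 <= q')%Z /\
  alpha * (IZR q * x + IZR q') = IZR p * x + IZR p' /\
  (p * q' - p' * q = if Nat.even n then -1 else 1)%Z.

Lemma convergent_invariant_0 : convergent_invariant 0.
Proof.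
  pose proof alpha_bounds as [a0 a1].
  assert (Hfloor : Int_part alpha = 0%Z).
  { symmetry; apply (Int_part_frac_part_spec alpha 0 alpha); [lra | simpl; ring]. }
  assert (Hfrac : frac_part alpha = alpha) by (unfold frac_part; rewrite Hfloor; simpl; ring).
  unfold convergent_invariant; simpl; unfold cf_digit; simpl.
  rewrite Hfloor, Hfrac.
  repeat split; try lia.
  - rewrite <- Rinv_1; apply Rinv_lt_contravar; lra.
  - simpl; field; lra.
Qed.

(* One step of the recursion: x = a + f with a = floor x >= 1 and, by the
   irrationality of alpha, 0 < f < 1; the next complete quotient is 1/f. *)
Lemma convergent_invariant_S (n : nat) :
  convergent_invariant n -> convergent_invariant (S n).
Proof.
  unfold convergent_invariant; simpl cf_pq.
  destruct (cf_pq alpha n) as [[p q] [p' q']].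
  intros [Hx [Hq [Hq' [Hrel Hdet]]]].
  change (cf_rest alpha (S (S n))) with (/ frac_part (cf_rest alpha (S n))).
  unfold cf_digit.
  set (x := cf_rest alpha (S n)) in *.
  set (a := Int_part x).
  assert (Hsplit : x = IZR a + frac_part x) by apply Rplus_Int_part_frac_part.
  assert (Hf0 : 0 < frac_part x).
  { destruct (base_fp x) as [[Hpos | Hzero] _]; [exact Hpos|].
    assert (Hint : x = IZR a) by lra.
    rewrite Hint in Hrel.
    exfalso; apply (alpha_irrational (q * a + q') (p * a + p')).
    - assert (0 < IZR a) by lra. apply lt_IZR in H. nia.
    - rewrite !plus_IZR, !mult_IZR, <- Hrel; ring. }
  assert (Hf1 : frac_part x < 1) by apply base_fp.
  assert (Ha : (1 <= a)%Z).
  { assert (0 < IZR a) by lra. apply lt_IZR in H. lia. }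
  set (f := frac_part x) in *. clearbody f a x.
  repeat split.
  - rewrite <- Rinv_1; apply Rinv_lt_contravar; lra.
  - nia.
  - lia.
  - rewrite !plus_IZR, !mult_IZR.
    replace (alpha * ((IZR a * IZR q + IZR q') * / f + IZR q))
      with (/ f * (alpha * (IZR q * x + IZR q'))) by (rewrite Hsplit; field; lra).
    rewrite Hrel, Hsplit; field; lra.
  - rewrite Nat.even_succ, <- Nat.negb_even.
    destruct (Nat.even n); simpl; lia.
Qed.

Lemma convergent_invariant_all (n : nat) : convergent_invariant n.
Proof.
  induction n; [exact convergent_invariant_0 | exact (convergent_invariant_S n IHn)].
Qed.

(* For odd k the convergent p/q lies above alpha, with gap e = p - q alpha
   satisfying e * (q x + q') = 1; hence 0 < e and (p - 1) e < alpha, while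
   p and q are coprime. *)
Lemma odd_convergent_properties (k : nat) : Nat.odd k = true ->
  let p := conv_p alpha k in let q := conv_q alpha k in
  (1 <= p)%Z /\ (1 <= q)%Z /\ Z.gcd p q = 1%Z /\
  0 < IZR p - IZR q * alpha /\ (IZR p - 1) * (IZR p - IZR q * alpha) < alpha.
Proof.
  intros Hodd p q.
  pose proof (convergent_invariant_all k) as Hinv.
  unfold convergent_invariant, conv_p, conv_q in *.
  destruct (cf_pq alpha k) as [[p0 q0] [p' q']]; simpl in p, q; subst p q.
  set (x := cf_rest alpha (S k)) in *; clearbody x.
  destruct Hinv as [Hx [Hq [Hq' [Hrel Hdet]]]].
  rewrite <- Nat.negb_odd, Hodd in Hdet; simpl in Hdet.
  pose proof alpha_bounds as [a0 a1].
  assert (HqR : 1 <= IZR q0) by (apply IZR_le; lia).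
  assert (Hq'R : 0 <= IZR q') by (apply IZR_le; lia).
  set (e := IZR p0 - IZR q0 * alpha).
  set (den := IZR q0 * x + IZR q').
  assert (Hden : 1 < den) by (unfold den; nra).
  assert (He : e * den = 1).
  { unfold e, den.
    replace ((IZR p0 - IZR q0 * alpha) * (IZR q0 * x + IZR q'))
      with (IZR p0 * (IZR q0 * x + IZR q') - IZR q0 * (alpha * (IZR q0 * x + IZR q')))
      by ring.
    rewrite Hrel, <- Hdet, minus_IZR, !mult_IZR; ring. }
  assert (He0 : 0 < e) by nra.
  assert (He1 : e < 1) by nra.
  assert (Hp : (1 <= p0)%Z).
  { assert (0 < IZR p0) by (unfold e in He0; nra). apply lt_IZR in H; lia. }
  repeat split; auto.
  - apply Z.bezout_1_gcd; exists q', (- p')%Z; lia.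
  - assert (Hlt : IZR p0 - 1 < alpha * den).
    { unfold e in He1; unfold den.
      assert (0 <= (x - 1) * IZR q0) by (apply Rmult_le_pos; lra). nra. }
    apply Rlt_le_trans with (alpha * den * e); [nra|].
    right; rewrite Rmult_assoc, (Rmult_comm den), He; ring.
Qed.

Lemma odd_convergent_index_gap (k j : nat) : Nat.odd k = true ->
  let p := conv_p alpha k in let q := conv_q alpha k in
  (j < Z.to_nat p)%nat -> 0 <= INR j * (IZR p - IZR q * alpha) < alpha.
Proof.
  intros Hodd p q Hj.
  destruct (odd_convergent_properties k Hodd) as [Hp [_ [_ [Hgap Hgap_small]]]].
  fold p q in Hp, Hgap, Hgap_small.
  assert (INR j + 1 <= IZR p).
  { rewrite <- S_INR, INR_IZR_INZ; apply IZR_le; lia. }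
  pose proof (pos_INR j).
  set (e := IZR p - IZR q * alpha) in *.
  split; [apply Rmult_le_pos; lra|].
  apply Rle_lt_trans with ((IZR p - 1) * e); [apply Rmult_le_compat_r|]; lra.
Qed.

(* Since 2^(j/alpha) = 3^j, the j-th term 2^floor(j/alpha) / 3^(j+1) of the
   sum is 2^(-frac(j/alpha)) / 3. *)
Lemma term_frac_part (j : nat) :
  powerRZ 2 (Int_part (INR j / alpha)) / 3 ^ S j
  = exp (- (frac_part (INR j / alpha) * ln 2)) / 3.
Proof.
  pose proof ln2_pos; pose proof ln2_lt_ln3.
  rewrite powerRZ_Rpower, <- Rpower_pow by lra; unfold Rpower.
  replace (IZR (Int_part (INR j / alpha)))
    with (INR j / alpha - frac_part (INR j / alpha)) by (unfold frac_part; ring).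
  replace ((INR j / alpha - frac_part (INR j / alpha)) * ln 2)
    with (INR j * ln 3 - frac_part (INR j / alpha) * ln 2) by (unfold alpha; field; lra).
  rewrite Rminus_def, exp_plus.
  rewrite S_INR, Rmult_plus_distr_r, Rmult_1_l, exp_plus, exp_ln by lra.
  field; apply Rgt_not_eq, exp_pos.
Qed.

Lemma frac_part_residue (a : R) (P Q j : nat) :
  0 < a -> (0 < P)%nat -> 0 <= INR j * (INR P - INR Q * a) < a ->
  let r := ((j * Q) mod P)%nat in
  INR r / INR P <= frac_part (INR j / a) < (INR r + 1) / INR P.
Proof.
  intros Ha HP Hje r.
  assert (HP0 : 0 < INR P) by (apply lt_0_INR; exact HP).
  set (m := ((j * Q) / P)%nat).
  assert (Hdiv : INR j * INR Q = INR P * INR m + INR r).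
  { rewrite <- !mult_INR, <- plus_INR; f_equal; apply Nat.div_mod_eq. }
  assert (Hr : INR r + 1 <= INR P).
  { rewrite <- S_INR; apply le_INR, Nat.mod_upper_bound; lia. }
  set (w := (INR r + INR j * (INR P - INR Q * a) / a) / INR P).
  assert (Hdelta : 0 <= INR j * (INR P - INR Q * a) / a < 1).
  { split.
    - apply Rle_mult_inv_pos; lra.
    - apply (Rmult_lt_reg_r a); [lra|]. field_simplify; lra. }
  assert (Hw_lo : INR r / INR P <= w).
  { apply Rmult_le_compat_r; [left; apply Rinv_0_lt_compat|]; lra. }
  assert (Hw_hi : w < (INR r + 1) / INR P).
  { apply Rmult_lt_compat_r; [apply Rinv_0_lt_compat|]; lra. }
  assert (Hfrac : frac_part (INR j / a) = w).
  { symmetry; apply (Int_part_frac_part_spec _ (Z.of_nat m)).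
    - split.
      + apply Rle_trans with (INR r / INR P); [|exact Hw_lo].
        apply Rle_mult_inv_pos; [apply pos_INR | exact HP0].
      + apply Rlt_le_trans with ((INR r + 1) / INR P); [exact Hw_hi|].
        apply (Rmult_le_reg_r (INR P)); [exact HP0|]. field_simplify; lra.
    - rewrite <- INR_IZR_INZ; unfold w.
      replace (INR r) with (INR j * INR Q - INR P * INR m) by lra.
      field; lra. }
  rewrite Hfrac; split; assumption.
Qed.

Lemma exp_pow (a : R) (n : nat) : exp a ^ n = exp (INR n * a).
Proof.
  rewrite <- Rpower_pow by apply exp_pos; unfold Rpower; rewrite ln_exp; reflexivity.
Qed.

Lemma exp_residue_bounds (P r : nat) (w : R) : (0 < P)%nat ->
  INR r / INR P <= w < (INR r + 1) / INR P ->
  let c := exp (- (ln 2 / INR P)) in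
  c ^ S r < exp (- (w * ln 2)) <= c ^ r.
Proof.
  intros HP [Hlo Hhi] c.
  assert (HP0 : 0 < INR P) by (apply lt_0_INR; exact HP).
  pose proof ln2_pos.
  unfold c; rewrite !exp_pow, S_INR; split.
  - apply exp_increasing.
    apply Rmult_lt_compat_r with (r := ln 2) in Hhi; [|exact H].
    replace ((INR r + 1) * - (ln 2 / INR P)) with (- ((INR r + 1) / INR P * ln 2))
      by (field; lra).
    lra.
  - assert (Hle : - (w * ln 2) <= INR r * - (ln 2 / INR P)).
    { apply Rmult_le_compat_r with (r := ln 2) in Hlo; [|lra].
      replace (INR r * - (ln 2 / INR P)) with (- (INR r / INR P * ln 2)) by (field; lra).
      lra. }
    destruct (Rle_lt_or_eq_dec _ _ Hle) as [Hlt | Heq].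
    + left; apply exp_increasing; exact Hlt.
    + right; rewrite Heq; reflexivity.
Qed.

Lemma residues_permutation (P Q : nat) :
  Z.gcd (Z.of_nat P) (Z.of_nat Q) = 1%Z ->
  Permutation (map (fun j => (j * Q) mod P)%nat (seq 0 P)) (seq 0 P).
Proof.
  intros Hcop. apply Permutation_map_same_l.
  - apply FinFun.Injective_map_NoDup_in; [|apply seq_NoDup].
    intros j1 j2 Hj1 Hj2 Hmod; apply in_seq in Hj1, Hj2.
    pose proof (Nat.div_mod_eq (j1 * Q) P) as E1.
    pose proof (Nat.div_mod_eq (j2 * Q) P) as E2.
    assert (Hdvd : (Z.of_nat P | Z.of_nat Q * (Z.of_nat j1 - Z.of_nat j2))%Z).
    { exists (Z.of_nat ((j1 * Q) / P) - Z.of_nat ((j2 * Q) / P))%Z.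
      rewrite Hmod in E1. lia. }
    apply Z.gauss in Hdvd; [|exact Hcop].
    destruct Hdvd as [t Ht].
    destruct (Z.lt_trichotomy t 0) as [Ht0 | [Ht0 | Ht0]]; nia.
  - intros r Hr. apply in_map_iff in Hr as [j [<- Hj]]. apply in_seq in Hj.
    apply in_seq; split; [lia|]. apply Nat.mod_upper_bound; lia.
Qed.

Definition lsum (l : list nat) (f : nat -> R) : R :=
  fold_right (fun j acc => f j + acc) 0 l.

Lemma lsum_app (l1 l2 : list nat) (f : nat -> R) :
  lsum (l1 ++ l2) f = lsum l1 f + lsum l2 f.
Proof. induction l1; simpl; [ring | rewrite IHl1; ring]. Qed.

Lemma sum1_lsum (n : nat) (f : nat -> R) : sum1 n f = lsum (seq 0 n) (fun j => f (S j)).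
Proof.
  induction n; [reflexivity|].
  simpl sum1; rewrite seq_S, lsum_app, IHn; simpl; ring.
Qed.

Lemma lsum_map (l : list nat) (g : nat -> nat) (f : nat -> R) :
  lsum (map g l) f = lsum l (fun j => f (g j)).
Proof. induction l; simpl; congruence. Qed.

Lemma lsum_perm (l l' : list nat) (f : nat -> R) :
  Permutation l l' -> lsum l f = lsum l' f.
Proof. induction 1; simpl; lra. Qed.

Lemma lsum_ext (l : list nat) (f g : nat -> R) :
  (forall j, In j l -> f j = g j) -> lsum l f = lsum l g.
Proof.
  induction l; simpl; intros H; [reflexivity|].
  rewrite H, IHl; auto.
Qed.

Lemma lsum_scal (l : list nat) (c : R) (f : nat -> R) :
  lsum l (fun j => c * f j) = c * lsum l f.
Proof. induction l; simpl; [ring | rewrite IHl; ring]. Qed.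

Lemma lsum_bracket (l : list nat) (f g h : nat -> R) : l <> nil ->
  (forall j, In j l -> f j < g j <= h j) -> lsum l f < lsum l g <= lsum l h.
Proof.
  induction l as [|a l IH]; intros Hne Hfgh; [congruence|].
  pose proof (Hfgh a (or_introl eq_refl)) as Ha.
  destruct l as [|b l]; simpl in *; [lra|].
  assert (Hrest : lsum (b :: l) f < lsum (b :: l) g <= lsum (b :: l) h).
  { apply IH; [discriminate | intros j Hj; apply Hfgh; right; exact Hj]. }
  simpl in Hrest; lra.
Qed.

Lemma geometric_sum (c : R) (n : nat) :
  lsum (seq 0 n) (pow c) * (1 - c) = 1 - c ^ n.
Proof.
  induction n; [simpl; ring|].
  rewrite seq_S, lsum_app, Rmult_plus_distr_r, IHn; simpl; ring.
Qed.

Lemma residue_sum_bounds (P Q : nat) (c : R) (T : nat -> R) :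
  (0 < P)%nat -> Z.gcd (Z.of_nat P) (Z.of_nat Q) = 1%Z ->
  (forall j, (j < P)%nat ->
     c ^ S ((j * Q) mod P) < T j <= c ^ ((j * Q) mod P)) ->
  c * lsum (seq 0 P) (pow c) < lsum (seq 0 P) T <= lsum (seq 0 P) (pow c).
Proof.
  intros HP Hcop HT.
  pose proof (residues_permutation P Q Hcop) as Hperm.
  rewrite <- (lsum_perm _ _ (pow c) Hperm), lsum_map, <- lsum_scal.
  apply lsum_bracket.
  - destruct P; [lia | discriminate].
  - intros j Hj; apply in_seq in Hj; apply (HT j); lia.
Qed.

(* With c = 2^(-1/P) we have c^P = 1/2, so 1 + c + ... + c^(P-1) = 1/(2(1-c)). *)
Lemma geometric_sum_root_half (P : nat) : (0 < P)%nat ->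
  let c := exp (- (ln 2 / INR P)) in
  c < 1 /\ lsum (seq 0 P) (pow c) = / (2 * (1 - c)).
Proof.
  intros HP c.
  assert (HP0 : 0 < INR P) by (apply lt_0_INR; exact HP).
  pose proof ln2_pos.
  assert (Hc1 : c < 1).
  { rewrite <- exp_0; apply exp_increasing.
    assert (0 < ln 2 / INR P) by (apply Rdiv_lt_0_compat; lra). lra. }
  assert (HcP : c ^ P = / 2).
  { unfold c; rewrite exp_pow.
    replace (INR P * - (ln 2 / INR P)) with (- ln 2) by (field; lra).
    rewrite exp_Ropp, exp_ln; lra. }
  split; [exact Hc1|].
  pose proof (geometric_sum c P) as Hgeom; rewrite HcP in Hgeom.
  apply (Rmult_eq_reg_r (1 - c)); [|lra].
  rewrite Hgeom; field; lra.
Qed.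

(* For u > 0: 0 < 1/(1 - e^(-u)) - 1/u < 1, i.e. c u < 1 - c < u with
   c = e^(-u); both follow from 1 + x < e^x for x <> 0. *)
Lemma exp_neg_recip_bounds (u : R) : 0 < u ->
  0 < / (1 - exp (- u)) - / u < 1.
Proof.
  intros Hu.
  pose proof (exp_ineq1 (- u) ltac:(lra)) as Hlo.
  pose proof (exp_ineq1 u ltac:(lra)) as Hhi.
  assert (Hinv : exp (- u) * exp u = 1) by (rewrite <- exp_plus, Rplus_opp_l, exp_0; reflexivity).
  set (c := exp (- u)) in *.
  assert (Hc0 : 0 < c) by apply exp_pos.
  assert (Hcu : c * (1 + u) < 1) by nra.
  assert (Hc1 : c < 1) by nra.
  split.
  - assert (/ u < / (1 - c)) by (apply Rinv_lt_contravar; nra). lra.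
  - replace (/ (1 - c) - / u) with ((u - (1 - c)) / ((1 - c) * u)) by (field; lra).
    apply (Rmult_lt_reg_r ((1 - c) * u)); [nra|].
    field_simplify; nra.
Qed.

Lemma third_of_geometric_bracket (u S : R) : 0 < u ->
  let c := exp (- u) in
  c * / (2 * (1 - c)) < S <= / (2 * (1 - c)) -> Rabs (/ 3 * S - / (6 * u)) < 1 / 6.
Proof.
  intros Hu c HS.
  pose proof (exp_neg_recip_bounds u Hu) as [HD0 HD1]; fold c in HD0, HD1.
  assert (Hc1 : c < 1) by (unfold c; rewrite <- exp_0; apply exp_increasing; lra).
  assert (HcG : c * / (2 * (1 - c)) = / (1 - c) / 2 - / 2) by (field; lra).
  assert (HG : / (2 * (1 - c)) = / (1 - c) / 2) by (field; lra).
  assert (Hu6 : / (6 * u) = / u / 6) by (field; lra).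
  apply Rabs_def1; lra.
Qed.

Theorem lemma49 (k : nat) (hk1 : (1 < k)%nat) (hkodd : Nat.odd k = true) :
  Rabs (sum1 (Z.to_nat (conv_p alpha k))
          (fun i => powerRZ 2 (Int_part (INR (i - 1) / alpha)) / 3 ^ i)
        - IZR (conv_p alpha k) / (6 * ln 2)) < 1 / 6.
Proof.
  pose proof (odd_convergent_properties k hkodd) as [Hp [Hq [Hcop _]]].
  set (p := conv_p alpha k) in *; set (q := conv_q alpha k) in *.
  set (P := Z.to_nat p); set (Q := Z.to_nat q).
  assert (HP : (0 < P)%nat) by lia.
  assert (HPR : INR P = IZR p) by (rewrite INR_IZR_INZ; f_equal; lia).
  assert (HQR : INR Q = IZR q) by (rewrite INR_IZR_INZ; f_equal; lia).
  set (T := fun j : nat => exp (- (frac_part (INR j / alpha) * ln 2))).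
  assert (Hsum : sum1 P (fun i => powerRZ 2 (Int_part (INR (i - 1) / alpha)) / 3 ^ i)
                 = / 3 * lsum (seq 0 P) T).
  { rewrite sum1_lsum, <- lsum_scal; apply lsum_ext; intros j _.
    rewrite Nat.sub_succ, Nat.sub_0_r, term_frac_part; unfold T; field. }
  (* each T j lies between consecutive powers of c = 2^(-1/P) *)
  assert (HT : exp (- (ln 2 / INR P)) * lsum (seq 0 P) (pow (exp (- (ln 2 / INR P))))
               < lsum (seq 0 P) T <= lsum (seq 0 P) (pow (exp (- (ln 2 / INR P))))).
  { apply (residue_sum_bounds P Q _ T HP); [unfold P, Q; rewrite !Z2Nat.id by lia; exact Hcop|].
    intros j Hj; apply exp_residue_bounds; [exact HP|].
    apply frac_part_residue; [apply alpha_bounds | exact HP|].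
    rewrite HPR, HQR; exact (odd_convergent_index_gap k j hkodd Hj). }
  destruct (geometric_sum_root_half P HP) as [_ HG]; rewrite HG in HT.
  replace (IZR p / (6 * ln 2)) with (/ (6 * (ln 2 / INR P))).
  - fold P; rewrite Hsum; apply third_of_geometric_bracket; [|exact HT].
    apply Rdiv_lt_0_compat; [apply ln2_pos | apply lt_0_INR; exact HP].
  - assert (0 < IZR p) by (apply IZR_lt; lia). pose proof ln2_pos.
    rewrite HPR; field; split; apply Rgt_not_eq; lra.
Qed.
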